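(* Consider the discrete first-price auction in the model with ties with $n=2$ bidders whose values are drawn independently and uniformly from $X=\{0,1,\dots,x\}$, where $x\ge10$. If $\beta$ is a symmetric equilibrium, then $\beta(v)=\lfloor v/2\rfloor$ for all $v\in X$. Consequently, if moreover $x$ is even, the auction has no symmetric equilibrium.
   Context: Model. Two risk-neutral bidders compete for one indivisible object. Values and bids lie in $X=\{0,1,2,\dots,x\}$; each bidder's value is drawn independently and uniformly from $X$. A (pure) strategy is a bidding function $\beta:X\to X$. In the model with ties, the higher bidder wins and, if the two bids are equal, each wins with probability $1/2$. In the first-price auction, a bidder with value $v_i$ bidding $b_i$ gets expected payoff $(v_i-b_i)\Pr(i\text{ wins})$. An equilibrium is a profile of bidding functions such that each bidder's bidding function maximises their expected payoff given the other's (a pure-strategy Bayes–Nash equilibrium) and such that no bidder uses a weakly dominated bidding function (a bidding function is weakly dominated if some other bidding function yields at least as high expected payoff against every opponent bidding function, and strictly higher against some). A symmetric equilibrium is an equilibrium in which both bidders use the same bidding function. *)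

From mathcomp Require Import all_boot all_order all_algebra.
Set Implicit Arguments. Unset Strict Implicit. Unset Printing Implicit Defensive.
Import Order.TTheory GRing.Theory Num.Theory.
Local Open Scope ring_scope.

Definition bidfun (x : nat) := 'I_x.+1 -> 'I_x.+1.

(* Probability that a bid b wins against an opponent using bidding function g
   whose value is uniform on X (ties broken by a fair coin). *)
Definition win_prob (x : nat) (g : bidfun x) (b : 'I_x.+1) : rat :=
  (\sum_(w : 'I_x.+1)
      ((if (nat_of_ord (g w) < nat_of_ord b)%N then 1 else 0)
       + (if nat_of_ord (g w) == nat_of_ord b then 1 / 2 else 0)))
  / (x.+1)%:R.

Definition interim_payoff (x : nat) (g : bidfun x) (v b : 'I_x.+1) : rat :=
  ((nat_of_ord v)%:R - (nat_of_ord b)%:R) * win_prob g b.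

Definition payoff (x : nat) (f g : bidfun x) : rat :=
  (\sum_(v : 'I_x.+1) interim_payoff g v (f v)) / (x.+1)%:R.

Definition best_response (x : nat) (f g : bidfun x) : Prop :=
  forall f' : bidfun x, payoff f' g <= payoff f g.

Definition weakly_dominated (x : nat) (f : bidfun x) : Prop :=
  exists f' : bidfun x,
    (forall g : bidfun x, payoff f g <= payoff f' g) /\
    (exists g : bidfun x, payoff f g < payoff f' g).

Definition equilibrium (x : nat) (f1 f2 : bidfun x) : Prop :=
  [/\ best_response f1 f2, best_response f2 f1,
      ~ weakly_dominated f1 & ~ weakly_dominated f2].

Definition symmetric_equilibrium (x : nat) (b : bidfun x) : Prop :=
  equilibrium b b.

(* Scaled by 2(x+1), the payoff of value v bidding b is (v - b)(cut b +
   cut (b+1)), where cut b counts the opponent values bidding below b.  Calling the values bidding k the pool of k, a few deviations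
   (the top of a pool bidding one more, the bottom of a pool above an empty
   pool bidding one less) show by induction that cut j = 2j while
   2j <= x + 1, for x >= 10; so bid v = v/2, and x even is impossible.
   The second half shows that a symmetric equilibrium has this structure:
   undominatedness gives f 0 = 0 and f v < v, and single crossing makes f
   nondecreasing. *)

From mathcomp Require Import all_boot all_order all_algebra.
From mathcomp Require Import zify ring.

Set Implicit Arguments. Unset Strict Implicit. Unset Printing Implicit Defensive.
Import Order.TTheory GRing.Theory Num.Theory.

(* The interim payoff of value v bidding b, scaled by 2(x+1), when the opponent
   bids below b on exactly [cut b] values. *)
Definition scaled_payoff (cut : nat -> nat) (v b : nat) : nat :=
  (v - b) * (cut b + cut b.+1).

(* Arithmetic core of [empty_pool_below]: with t = v - k and c the pool size,
   the downward constraint 2v <= tc and the upward constraint of the top of the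
   pool force c <= 3, hence 3k <= v. *)
Lemma empty_pool_arith k t c :
  2 * (k + t) <= t * c -> (t + c - 2) * c <= 2 * (k + t) + c -> 3 * k <= k + t.
Proof.
move=> down up.
have c3 : c <= 3.
  rewrite leqNgt; apply/negP => c4.
  have : t.+2 * c <= (t + c - 2) * c by rewrite leq_mul2r; apply/orP; right; lia.
  rewrite !mulSn; lia.
have : t * c <= t * 3 by rewrite leq_mul2l c3 orbT.
lia.
Qed.

Section Cutoffs.
Variables (x : nat) (bid cut : nat -> nat).
Hypothesis bid_best : forall {v b}, v <= x -> b <= v ->
  scaled_payoff cut v b <= scaled_payoff cut v (bid v).
Hypothesis bid_cutoff : forall v, v <= x -> forall b, (bid v < b) = (v < cut b).
Hypothesis bid_lt : forall v, v <= x -> 0 < v -> bid v < v.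
Hypothesis bid0 : bid 0 = 0.
Hypothesis cut_le : forall b, cut b <= x.+1.
Hypothesis cut_mono : forall {a b}, a <= b -> cut a <= cut b.

Lemma cut0 : cut 0 = 0.
Proof. by apply/eqP; rewrite -leqn0 leqNgt -bid_cutoff. Qed.

Lemma cut_bid v : v <= x -> cut (bid v) <= v < cut (bid v).+1.
Proof. by move=> vx; rewrite leqNgt -!bid_cutoff // ltnn ltnSn. Qed.

Lemma bid_eq v k : v <= x -> cut k <= v < cut k.+1 -> bid v = k.
Proof.
move=> vx /andP[lo hi]; apply/eqP; rewrite eqn_leq -ltnS bid_cutoff // hi.
by rewrite leqNgt bid_cutoff // -leqNgt.
Qed.

Lemma bid_ge v k : v <= x -> cut k <= v -> k <= bid v.
Proof. by move=> vx h; rewrite leqNgt bid_cutoff // -leqNgt. Qed.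

(* The highest value of a nonempty pool k does not gain by bidding k + 1: with
   c the pool size, (cut (k+1) - (k+2)) c <= 2 cut k + c. *)
Lemma pool_top k : cut k < cut k.+1 ->
  (cut k.+1 - k.+2) * (cut k.+1 - cut k) <= 2 * cut k + (cut k.+1 - cut k).
Proof.
move=> ne; set T := (cut k.+1).-1.
have Tx : T <= x by have := cut_le k.+1; rewrite /T; lia.
have bT : bid T = k by apply: bid_eq => //; rewrite /T; lia.
have next_mono := cut_mono (leqnSn k.+1).
case: (leqP k.+1 T) => kT; last by rewrite (_ : cut k.+1 - k.+2 = 0); lia.
by have := bid_best Tx kT; rewrite bT /scaled_payoff; nia.
Qed.

Lemma small_pool k : 2 * k <= cut k + 1 -> cut k.+1 <= cut k + 3.
Proof.
move=> hk; rewrite leqNgt; apply/negP => big.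
have := pool_top (leq_ltn_trans (leq_addr _ _) big).
have [c ->] : exists c, cut k.+1 = cut k + c.+4 by exists (cut k.+1 - cut k - 4); lia.
rewrite (_ : cut k + c.+4 - cut k = c.+4); last by lia.
set s := cut k + c.+4 - k.+2.
have : s * 4 <= s * c.+4 by rewrite leq_mul2l; apply/orP; right.
rewrite /s; lia.
Qed.

(* A nonempty pool k just above an empty pool k - 1 starts late: 3k <= cut k.
   Its lowest value v would otherwise gain by bidding k - 1. *)
Lemma empty_pool_below k : 0 < k -> cut k.-1 = cut k -> cut k < cut k.+1 ->
  3 * k <= cut k.
Proof.
move=> k0 gap ne; set v := cut k.
have vx : v <= x by have := cut_le k.+1; rewrite /v; lia.
have bv : bid v = k by apply: bid_eq; rewrite // leqnn.
have v0 : 0 < v by case: v bv vx => [|//]; rewrite bid0 => e; move: k0; rewrite -e.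
have kv : k < v by rewrite -{1}bv bid_lt.
have down := bid_best vx (leq_trans (leq_pred k) (ltnW kv)).
rewrite /scaled_payoff bv prednK // gap -/v in down.
have up := pool_top ne; rewrite -/v in up.
have [t vE] : exists t, v = k + t by exists (v - k); lia.
have [c cE] : exists c, cut k.+1 = v + c by exists (cut k.+1 - v); lia.
have e1 : v + c - v = c by lia.
have e2 : v + c - k.+2 = t + c - 2 by lia.
have e3 : v - k.-1 = t.+1 by lia.
have e4 : v - k = t by lia.
rewrite cE e1 e2 in up; rewrite cE e3 e4 in down.
rewrite vE; apply: (@empty_pool_arith k t c); rewrite -vE //.
by move: down; rewrite !mulnDr !mulSn; lia.
Qed.

(* The form used below: if the value v = cut j bids above j, then some pool
   between j and bid v is empty, so 3 bid v <= v. *)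
Lemma skipped_bid v j : v <= x -> cut j = v -> j < bid v -> 3 * bid v <= v.
Proof.
move=> vx cj jb; have /andP[lo hi] := cut_bid vx.
have lo' : cut j <= cut (bid v).-1 by apply: cut_mono; lia.
have gap : cut (bid v).-1 = cut (bid v).
  by apply/eqP; rewrite eqn_leq cut_mono ?leq_pred //=; lia.
have := empty_pool_below (leq_ltn_trans (leq0n j) jb) gap (leq_ltn_trans lo hi).
lia.
Qed.

(* The induction step: if cut j = 2j for all j <= m, then cut (m+1) = 2(m+1),
   obtained by excluding pools of size 0, 1 and 3 at bid m. *)
Section Doubling.
Variable m : nat.
Hypothesis cut_doubles : forall {j}, j <= m -> cut j = 2 * j.

Lemma next_cut_ge : 2 * m <= cut m.+1.
Proof. by rewrite -cut_doubles // cut_mono. Qed.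

Lemma next_cut_le : cut m.+1 <= (2 * m).+3.
Proof.
by have := small_pool (k := m); rewrite (cut_doubles (leqnn m)) addn1 addn3; apply.
Qed.

(* The pool of m is not empty: value 2m would skip bid m. *)
Lemma pool_nonempty : 2 * m <= x -> cut m.+1 <> 2 * m.
Proof.
move=> vx e; have := bid_ge vx (eq_leq e).
by have := skipped_bid vx (cut_doubles (leqnn m)); lia.
Qed.

(* The pool of m is not a singleton: value 2m + 1 would then bid m + 1 and
   shading to m is profitable unless the pool of m + 1 has five or more
   values, which [small_pool] excludes. *)
Lemma pool_not_singleton : (2 * m).+1 <= x -> cut m.+1 <> (2 * m).+1.
Proof.
move=> vx e; have bid_gt := bid_ge vx (eq_leq e).
have bv : bid (2 * m).+1 = m.+1.
  by have := skipped_bid vx e; case: ltngtP bid_gt; lia.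
have down : scaled_payoff cut (2 * m).+1 m
            <= scaled_payoff cut (2 * m).+1 (bid (2 * m).+1) by apply: bid_best; lia.
have e1 : (2 * m).+1 - m = m.+1 by lia.
have e2 : (2 * m).+1 - m.+1 = m by lia.
rewrite /scaled_payoff bv (cut_doubles (leqnn m)) e e1 e2 in down.
have small : cut m.+2 <= (2 * m).+4 by have := small_pool (k := m.+1); rewrite e; lia.
have : m * ((2 * m).+1 + cut m.+2) <= m * (4 * m + 5).
  by rewrite leq_mul2l; apply/orP; right; lia.
by move: down; clear; nia.
Qed.

(* If the pool of m has three values, value 2m + 2 would bid m + 1 unless the
   pool of m + 1 is empty. *)
Lemma pool_triple_next_empty : cut m.+1 = (2 * m).+3 -> cut m.+2 = (2 * m).+3.
Proof.
move=> e; have vx : (2 * m).+2 <= x by have := cut_le m.+1; rewrite e.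
have bv : bid (2 * m).+2 = m by apply: bid_eq; rewrite // (cut_doubles (leqnn m)) e; lia.
have up : scaled_payoff cut (2 * m).+2 m.+1
          <= scaled_payoff cut (2 * m).+2 (bid (2 * m).+2) by apply: bid_best; lia.
have e1 : (2 * m).+2 - m.+1 = m.+1 by lia.
have e2 : (2 * m).+2 - m = m.+2 by lia.
rewrite /scaled_payoff bv (cut_doubles (leqnn m)) e e1 e2 in up.
apply/eqP; rewrite eqn_leq -{2}e cut_mono // andbT leqNgt; apply/negP => big.
have : m.+1 * (4 * m + 7) <= m.+1 * ((2 * m).+3 + cut m.+2).
  by rewrite leq_mul2l; apply/orP; right; lia.
by move: up; clear; nia.
Qed.

(* A pool of three values at m is excluded for small m by the empty pool above
   it, and for m >= 4 because value 2m - 1 would raise its bid to m. *)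
Lemma pool_not_triple_low : (2 * m).+3 <= x -> cut m.+1 <> (2 * m).+3.
Proof.
move=> vx e; have e2 := pool_triple_next_empty e.
by have := bid_ge vx (eq_leq e2); have := skipped_bid vx e; lia.
Qed.

Lemma pool_not_triple_high : 4 <= m -> cut m.+1 <> (2 * m).+3.
Proof.
move=> m4 e; have [n mE] : exists n, m = n.+1 by exists m.-1; lia.
have cn : cut n = 2 * n by apply: cut_doubles; lia.
have cm : cut m = 2 * m by apply: cut_doubles.
have vx : (2 * n).+1 <= x by have := cut_le m.+1; rewrite e; lia.
have bv : bid (2 * n).+1 = n by apply: bid_eq; rewrite // cn -mE cm; lia.
have up : scaled_payoff cut (2 * n).+1 m
          <= scaled_payoff cut (2 * n).+1 (bid (2 * n).+1) by apply: bid_best; lia.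
have e1 : (2 * n).+1 - m = n by lia.
have e2 : (2 * n).+1 - n = n.+1 by lia.
rewrite /scaled_payoff bv -mE cn cm e e1 e2 in up.
by move: up m4; rewrite mE; clear; nia.
Qed.

Lemma next_cut_double : 10 <= x -> (2 * m).+1 <= x -> cut m.+1 = 2 * m.+1.
Proof.
move=> x10 mx; have lo := next_cut_ge; have hi := next_cut_le.
have ne0 := pool_nonempty (ltnW mx); have ne1 := pool_not_singleton mx.
have ne3 : cut m.+1 <> (2 * m).+3.
  case: (leqP 4 m) => [m4|m3]; first exact: pool_not_triple_high.
  by apply: pool_not_triple_low; lia.
lia.
Qed.

(* When x = 2m the last pool is {2m}, and value 2m would shade to m - 1. *)
Lemma no_even_top : 3 <= m -> x = 2 * m -> False.
Proof.
move=> m3 xE; have vx : 2 * m <= x by rewrite xE.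
have e : cut m.+1 = (2 * m).+1.
  by have := next_cut_ge; have := pool_nonempty vx; have := cut_le m.+1; lia.
have [n mE] : exists n, m = n.+1 by exists m.-1; lia.
have cn : cut n = 2 * n by apply: cut_doubles; lia.
have cm := cut_doubles (leqnn m).
have bv : bid (2 * m) = m by apply: bid_eq; rewrite // cm e; lia.
have down : scaled_payoff cut (2 * m) n
            <= scaled_payoff cut (2 * m) (bid (2 * m)) by apply: bid_best; lia.
have e1 : 2 * m - n = m.+1 by lia.
have e2 : 2 * m - m = m by lia.
rewrite /scaled_payoff bv -mE cn cm e e1 e2 in down.
by move: down m3; rewrite mE; clear; nia.
Qed.

End Doubling.

Lemma cut_double m : 10 <= x -> 2 * m <= x.+1 -> forall j, j <= m -> cut j = 2 * j.
Proof.
move=> x10; elim: m => [|m IH] mx j.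
  by rewrite leqn0 => /eqP ->; rewrite cut0.
have IHm : forall j, j <= m -> cut j = 2 * j by apply: IH; lia.
rewrite leq_eqVlt ltnS => /orP[/eqP -> | jm]; last exact: IHm.
by apply: (next_cut_double IHm) => //; lia.
Qed.

Lemma bid_half : 10 <= x -> odd x /\ forall v, v <= x -> bid v = v./2.
Proof.
move=> x10; have xE : x = odd x + 2 * x./2 by rewrite mul2n odd_double_half.
case oddx: (odd x) in xE *; last first.
  have cutD : forall j, j <= x./2 -> cut j = 2 * j by apply: cut_double; lia.
  by exfalso; apply: (no_even_top cutD) => //; lia.
split=> // v vx.
have cutD : forall j, j <= (x./2).+1 -> cut j = 2 * j by apply: cut_double; lia.
have vE : v = odd v + 2 * v./2 by rewrite mul2n odd_double_half.
by apply: bid_eq => //; rewrite !cutD; lia.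
Qed.

End Cutoffs.

Lemma sum_below n i : i <= n -> \sum_(k < n) (k < i : nat) = i.
Proof.
move=> le_in; transitivity (\sum_(k < i) 1); last first.
  by rewrite sum_nat_const card_ord muln1.
rewrite (big_ord_widen _ (fun _ => 1) le_in) [RHS]big_mkcond.
by apply: eq_bigr => k _; case: (k < i).
Qed.

Lemma downset_count (P : pred nat) n :
  (forall i j, i <= j -> j < n -> P j -> P i) ->
  forall i, i < n -> P i = (i < \sum_(k < n) P k).
Proof.
move=> down i lt_in; apply/idP/idP => [Pi | ].
  rewrite -ltnS -(sum_below lt_in); apply: leq_sum => k _.
  by rewrite ltnS; case: (leqP k i) => //= le_ki; rewrite (down _ _ le_ki lt_in Pi).
apply: contraLR => notPi; rewrite -leqNgt -[X in _ <= X](sum_below (ltnW lt_in)).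
apply: leq_sum => k _; case: (ltnP k i) => //= le_ik; case Pk: (P k) => //.
by rewrite (down _ _ le_ik (ltn_ord k) Pk) in notPi.
Qed.

Definition below (x : nat) (g : bidfun x) (b : nat) : nat :=
  \sum_(w : 'I_x.+1) (g w < b : nat).

Lemma below_le x (g : bidfun x) b : below g b <= x.+1.
Proof.
rewrite -[x.+1]card_ord -sum1_card; apply: leq_sum => w _.
by case: (_ < _).
Qed.

Lemma below_mono x (g : bidfun x) a b : a <= b -> below g a <= below g b.
Proof.
move=> ab; apply: leq_sum => w _.
by case: (ltnP (g w) a) => // h; rewrite (leq_trans h ab).
Qed.

(* Every bid actually used is submitted by at least one value. *)
Lemma below_strict x (g : bidfun x) w : below g (g w) < below g (g w).+1.
Proof.
rewrite /below (bigD1 w) //= [X in _ < X](bigD1 w) //= ltnn ltnSn ltnS.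
by apply: leq_sum => i _; case: ltnP => //= h; rewrite ltnS (ltnW h).
Qed.

Lemma below_cutoff x (g : bidfun x) : {homo g : v w / (v <= w)%N} ->
  forall (w : 'I_x.+1) b, (g w < b) = (w < below g b).
Proof.
move=> mono w b; pose P k := g (inord k) < b.
have -> : below g b = \sum_(k < x.+1) P k.
  by apply: eq_bigr => k _; rewrite /P inord_val.
rewrite -downset_count //; first by rewrite /P inord_val.
move=> i j ij jx; rewrite /P; apply: leq_ltn_trans; apply: mono.
by rewrite !inordK // (leq_ltn_trans ij).
Qed.

Local Open Scope ring_scope.

(* Ties count for one half: the winning probability is the average of the
   probabilities of bidding strictly above, and weakly above, the opponent. *)
Lemma win_prob_below x (g : bidfun x) b :
  win_prob g b = (below g b + below g b.+1)%:R / 2 / (x.+1)%:R.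
Proof.
rewrite /win_prob /below; congr (_ / _).
rewrite natrD !natr_sum -big_split /= mulr_suml; apply: eq_bigr => w _.
have -> : (g w < b.+1)%N = (g w < b)%N || (g w == b :> nat).
  by rewrite ltnS leq_eqVlt orbC.
by case: ltngtP => _ /=; field.
Qed.

Lemma win_prob_ge0 x (g : bidfun x) b : 0 <= win_prob g b.
Proof. by rewrite win_prob_below !divr_ge0 ?ler0n. Qed.

Lemma interim_payoff_scaled x (g : bidfun x) (v b : 'I_x.+1) : (b <= v)%N ->
  interim_payoff g v b = (scaled_payoff (below g) v b)%:R / (2 * x.+1)%:R.
Proof.
move=> le_bv; rewrite /interim_payoff win_prob_below /scaled_payoff natrM natrB //.
by rewrite natrM; field; rewrite (_ : 1 + x%:R = x.+1%:R) ?pnatr_eq0 // -natr1 addrC.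
Qed.

Definition deviate x (f : bidfun x) (v b : 'I_x.+1) : bidfun x :=
  fun w => if w == v then b else f w.

Lemma payoff_deviate x (f g : bidfun x) v b :
  payoff (deviate f v b) g
  = payoff f g + (interim_payoff g v b - interim_payoff g v (f v)) / (x.+1)%:R.
Proof.
rewrite /payoff (bigD1 v) //= [in RHS](bigD1 v) //= /deviate eqxx.
rewrite (eq_bigr (fun w => interim_payoff g w (f w))); last by move=> w /negbTE ->.
by rewrite mulrDl mulrDl mulrBl; ring.
Qed.

Lemma best_response_interim x (f g : bidfun x) v b : best_response f g ->
  interim_payoff g v b <= interim_payoff g v (f v).
Proof.
move=> br; have := br (deviate f v b); rewrite payoff_deviate gerDl.
by rewrite pmulr_lle0 ?invr_gt0 ?ltr0n // subr_le0.
Qed.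

Lemma best_response_scaled x (f g : bidfun x) (v b : 'I_x.+1) :
  best_response f g -> (b <= v)%N -> (f v <= v)%N ->
  (scaled_payoff (below g) v b <= scaled_payoff (below g) v (f v))%N.
Proof.
move=> br le_bv le_fv; have := best_response_interim v b br.
by rewrite !interim_payoff_scaled // ler_pM2r ?invr_gt0 ?ltr0n // ler_nat.
Qed.

(* The opponent strategy bidding 0 everywhere witnesses strict dominance. *)
Definition zero_bid x : bidfun x := fun _ => ord0.
Arguments zero_bid : clear implicits.

Lemma below_zero_bid x b : (0 < b)%N -> below (zero_bid x) b = x.+1.
Proof.
move=> b0; rewrite /below (eq_bigr (fun _ => 1%N)) ?sum1_card ?card_ord //.
by move=> w _; rewrite /zero_bid /= b0.
Qed.

(* A positive bid at value 0 is weakly dominated by bidding 0 there. *)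
Lemma undominated_bid0 x (f : bidfun x) : ~ weakly_dominated f -> f ord0 = 0%N :> nat.
Proof.
move=> undom; apply/eqP; rewrite -leqn0 leqNgt; apply/negP => f0; apply: undom.
have zero_payoff (g : bidfun x) : interim_payoff g ord0 ord0 = 0.
  by rewrite /interim_payoff subrr mul0r.
have loss (g : bidfun x) :
    interim_payoff g ord0 (f ord0) = - ((f ord0)%:R * win_prob g (f ord0)).
  by rewrite /interim_payoff /= sub0r mulNr.
exists (deviate f ord0 ord0); split=> [g|]; last exists (zero_bid x).
  rewrite payoff_deviate lerDl zero_payoff loss sub0r opprK.
  by rewrite divr_ge0 ?ler0n // mulr_ge0 ?ler0n ?win_prob_ge0.
rewrite payoff_deviate ltrDl zero_payoff loss sub0r opprK.
rewrite mulr_gt0 ?invr_gt0 ?ltr0n // mulr_gt0 ?ltr0n // win_prob_below.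
by rewrite !below_zero_bid // !divr_gt0 ?ltr0n.
Qed.

(* A bid of at least v at a positive value v is weakly dominated by v - 1. *)
Lemma undominated_bid_lt x (f : bidfun x) (v : 'I_x.+1) : ~ weakly_dominated f ->
  (0 < v)%N -> (f v < v)%N.
Proof.
move=> undom v0; rewrite ltnNge; apply/negP => overbid; apply: undom.
pose b : 'I_x.+1 := inord v.-1.
have bE : b = v.-1 :> nat by rewrite inordK // (leq_ltn_trans (leq_pred _) (ltn_ord v)).
have gain (g : bidfun x) : interim_payoff g v b = win_prob g b.
  by rewrite /interim_payoff bE -natrB ?leq_pred // (_ : (v - v.-1)%N = 1%N) ?mul1r //; lia.
have loss (g : bidfun x) : interim_payoff g v (f v) <= 0.
  by rewrite /interim_payoff mulr_le0_ge0 ?win_prob_ge0 // subr_le0 ler_nat.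
exists (deviate f v b); split=> [g|]; last exists (zero_bid x).
  rewrite payoff_deviate lerDl gain.
  by rewrite mulr_ge0 ?invr_ge0 ?ler0n // subr_ge0 (le_trans (loss g) (win_prob_ge0 _ _)).
rewrite payoff_deviate ltrDl gain mulr_gt0 ?invr_gt0 ?ltr0n // subr_gt0.
rewrite (le_lt_trans (loss _)) // win_prob_below [below _ b.+1]below_zero_bid //.
by rewrite !divr_gt0 ?ltr0n // addn_gt0 orbT.
Qed.

Local Open Scope nat_scope.

Lemma undominated_bid_le x (f : bidfun x) (v : 'I_x.+1) : ~ weakly_dominated f -> f v <= v.
Proof.
move=> undom; case: (posnP v) => [v0 | /(undominated_bid_lt undom)/ltnW //].
have -> : v = ord0 by apply: val_inj.
by rewrite undominated_bid0.
Qed.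

Lemma single_crossing a b v v' X Y : a < b -> b <= v -> v < v' -> Y < X ->
  (v - a) * Y <= (v - b) * X -> (v' - b) * X <= (v' - a) * Y -> False.
Proof.
move=> ab bv vv' YX.
have [p vE] : exists p, v = b + p by exists (v - b); lia.
have [d v'E] : exists d, v' = b + p + d.+1 by exists (v' - v).-1; lia.
have [e bE] : exists e, b = a + e.+1 by exists (b - a).-1; lia.
subst v v' b; have dYX : d.+1 * Y < d.+1 * X by rewrite ltn_pmul2l.
rewrite (_ : a + e.+1 + p - a = p + e.+1); last by lia.
rewrite (_ : a + e.+1 + p - (a + e.+1) = p); last by lia.
rewrite (_ : a + e.+1 + p + d.+1 - (a + e.+1) = p + d.+1); last by lia.
rewrite (_ : a + e.+1 + p + d.+1 - a = p + d.+1 + e.+1); last by lia.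
by move: dYX; rewrite !mulnDl; lia.
Qed.

Lemma equilibrium_monotone x (f : bidfun x) :
  best_response f f -> ~ weakly_dominated f -> {homo f : v w / v <= w}.
Proof.
move=> br undom v w le_vw; rewrite leqNgt; apply/negP => lt_bids.
have fle u := undominated_bid_le u undom.
have lt_vw : v < w.
  by rewrite ltn_neqAle le_vw andbT; apply: contraTneq lt_bids => /val_inj ->; rewrite ltnn.
apply: (single_crossing lt_bids (fle v) lt_vw _
         (best_response_scaled br (leq_trans (ltnW lt_bids) (fle v)) (fle v))
         (best_response_scaled br (leq_trans (fle v) le_vw) (fle w))).
have := below_strict f v; have := below_mono f lt_bids.
by have := below_mono f (leqnSn (f w)); lia.
Qed.

(* A symmetric equilibrium, read as a bid function on nat, satisfies the
   hypotheses of the section [Cutoffs] with cut := below f. *)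
Lemma equilibrium_bid_half x (f : bidfun x) : 10 <= x -> symmetric_equilibrium f ->
  odd x /\ forall v : 'I_x.+1, f v = v./2 :> nat.
Proof.
move=> x10 [br _ undom _]; pose bid v := nat_of_ord (f (inord v)).
have bidE (v : 'I_x.+1) : bid v = f v by rewrite /bid inord_val.
have bid_best v b : v <= x -> b <= v ->
    scaled_payoff (below f) v b <= scaled_payoff (below f) v (bid v).
  move=> vx bv; have := @best_response_scaled x f f (inord v) (inord b) br.
  rewrite /bid !inordK ?(leq_ltn_trans bv) //; apply=> //.
  by have := undominated_bid_le (inord v) undom; rewrite inordK.
have bid_cutoff v : v <= x -> forall b, (bid v < b) = (v < below f b).
  by move=> vx b; rewrite /bid below_cutoff ?inordK //; exact: equilibrium_monotone.
have bid_lt v : v <= x -> 0 < v -> bid v < v.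
  move=> vx v0; have := @undominated_bid_lt x f (inord v) undom.
  by rewrite /bid !inordK //; apply.
have bid0 : bid 0 = 0.
  by rewrite /bid (_ : inord 0 = ord0) ?undominated_bid0 //; apply: val_inj; rewrite /= inordK.
have [oddx half] :=
  bid_half bid_best bid_cutoff bid_lt bid0 (@below_le x f) (@below_mono x f) x10.
by split=> // v; rewrite -bidE half // -ltnS.
Qed.

Theorem mainTheorem20 (x : nat) (hx : (10 <= x)%N) :
  (forall b : bidfun x, symmetric_equilibrium b ->
     forall v : 'I_x.+1, nat_of_ord (b v) = (nat_of_ord v)./2)
  /\ (~~ odd x -> forall b : bidfun x, ~ symmetric_equilibrium b).
Proof.
split=> [b eqb v | even_x b eqb].
  by have [_ ->] := equilibrium_bid_half hx eqb.
by have [odd_x _] := equilibrium_bid_half hx eqb; rewrite odd_x in even_x.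
Qed.
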